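(* For every positive integer $n$, the number $Z(n)=\sum_{k=0}^{n-1}M_{k}(n)$ is an integer, where $M_k(n)=\frac{1+(-1)^{k}k!(n-k-1)!}{n}$.
   Context: For integers $n\geq 1$ and $0\leq k\leq n-1$, $M_{k}(n)=\frac{1+(-1)^{k}k!(n-k-1)!}{n}$ (a rational number), and $Z(n)=\sum_{k=0}^{n-1}M_{k}(n)$. *)

From mathcomp Require Import all_boot all_order all_algebra.
Set Implicit Arguments. Unset Strict Implicit. Unset Printing Implicit Defensive.
Import Order.TTheory GRing.Theory Num.Theory.
Local Open Scope ring_scope.

Definition M (n k : nat) : rat :=
  (1 + (-1) ^+ k * (k`!)%:R * ((n - k - 1)`!)%:R) / n%:R.

Definition Z (n : nat) : rat := \sum_(0 <= k < n) M n k.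

From mathcomp Require Import all_boot all_order all_algebra.
From mathcomp Require Import ring zify.
Import Order.TTheory GRing.Theory Num.Theory.
Local Open Scope ring_scope.

(* With S_m = sum_(k <= m) (-1)^k k! (m-k)!, the numerators of the M_k(m+1)
   add up to (m+1) + S_m, so Z(m+1) = 1 + S_m / (m+1).  Multiplying S_m by
   m + 2 = (k+1) + (m+1-k) makes it telescope, giving
   (m+2) S_m = (m+1)! (1 + (-1)^m).  Hence S_m = 0 for odd m, and for m = 2i
   we get S_m / (m+1) = (2i)! / (i+1), an integer since i+1 <= 2i for i > 0. *)

Definition alt_fact_sum {R : pzRingType} (m : nat) : R :=
  \sum_(k < m.+1) (-1) ^+ k * (k`!)%:R * ((m - k)`!)%:R.

Lemma mulSS_alt_fact_sum (R : comPzRingType) (m : nat) :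
  m.+2%:R * alt_fact_sum m = (m.+1)`!%:R * (1 + (-1) ^+ m) :> R.
Proof.
pose b k : R := (-1) ^+ k * (k`!)%:R * ((m.+1 - k)`!)%:R.
have telescope_term k : (k < m.+1)%N ->
    m.+2%:R * ((-1) ^+ k * (k`!)%:R * ((m - k)`!)%:R) = - (b k.+1 - b k).
  move=> lt_k_m1; rewrite /b subSS.
  have -> : (m.+1 - k)%N = (m - k).+1 by lia.
  have -> : m.+2%:R = (m - k).+1%:R + k.+1%:R :> R by rewrite -natrD; congr _%:R; lia.
  rewrite !factS exprS !natrM; ring.
rewrite /alt_fact_sum mulr_sumr.
rewrite (eq_bigr _ (fun (k : 'I_m.+1) _ => telescope_term k (ltn_ord k))) sumrN.
rewrite -(big_mkord xpredT (fun k => b k.+1 - b k)) telescope_sumr //.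
by rewrite /b subn0 subnn fact0 exprS; ring.
Qed.

Lemma alt_fact_sum_odd (R : numDomainType) (m : nat) :
  odd m -> alt_fact_sum m = 0 :> R.
Proof.
move=> odd_m; have /eqP := mulSS_alt_fact_sum R m.
rewrite -signr_odd odd_m expr1 subrr mulr0 mulf_eq0 pnatr_eq0 /=.
by move/eqP.
Qed.

Lemma alt_fact_sum_double (R : numFieldType) (i : nat) :
  alt_fact_sum i.*2 = (i.*2.+1)`!%:R / i.+1%:R :> R.
Proof.
have := mulSS_alt_fact_sum R i.*2.
rewrite -signr_odd odd_double expr0 -doubleS -muln2 natrM => eq_S.
apply: (mulfI (_ : (i.+1 * 2)%:R != 0 :> R)); first by rewrite pnatr_eq0 muln2.
rewrite natrM eq_S; field.
by rewrite nat1r pnatr_eq0.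
Qed.

Lemma dvdn_fact_double (i : nat) : (i.+1 %| (i.*2)`!)%N.
Proof.
case: i => [|i]; first by rewrite fact0.
by apply: dvdn_fact; rewrite doubleS -addnn; lia.
Qed.

Lemma Z_alt_fact_sum (m : nat) : Z m.+1 = 1 + alt_fact_sum m / m.+1%:R.
Proof.
rewrite /Z /M -mulr_suml big_split /= sumr_const_nat subn0 mulrDl.
rewrite divff ?pnatr_eq0 // /alt_fact_sum big_mkord.
by congr (_ + _ / _); apply: eq_bigr => k _; rewrite subnAC subSS subn0.
Qed.

Lemma Z_odd (m : nat) : odd m -> Z m.+1 = 1.
Proof. by move=> odd_m; rewrite Z_alt_fact_sum alt_fact_sum_odd // mul0r addr0. Qed.

Lemma Z_double (i : nat) : Z (i.*2).+1 = 1 + ((i.*2)`! %/ i.+1)%:R.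
Proof.
rewrite Z_alt_fact_sum alt_fact_sum_double natr_div ?dvdn_fact_double //.
  by rewrite factS natrM; field; rewrite !nat1r !pnatr_eq0.
by rewrite unitfE pnatr_eq0.
Qed.

Theorem theorem1 (n : nat) (hn : (1 <= n)%N) : exists z : int, Z n = z%:~R.
Proof.
case: n hn => [//|m] _.
case/boolP: (odd m) => [odd_m | even_m].
  by exists 1; rewrite Z_odd.
exists (1 + ((m./2).*2`! %/ (m./2).+1)%N%:Z).
rewrite -{1}(odd_double_half m) (negbTE even_m) add0n Z_double.
by rewrite intrD rmorph1 -pmulrn.
Qed.
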